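(* Let $\nu$ be a partition with $\nu_1\le n$, and let $\nu'$ be its conjugate partition. Then $\nu$ is $n$-colorless if and only if, modulo $n$, the set of integers $\{\nu'_m-m\}_{m=1}^n$ coincides with $\{1,2,\dots,n\}$.
   Context: Here $n\ge3$ is fixed. Let $c_1,\dots,c_{n-1}$ be free generators of a free $\mathbb Z$-module, put $c_0=-(c_1+\dots+c_{n-1})$, and extend the indices $n$-periodically to $\mathbb Z$. For a partition $\gamma$ let $Y(\gamma)=\{(x,y)\in\mathbb Z_{\ge1}^2:\gamma_x\ge y\}$. The partition $\gamma$ is called $n$-colorless if $\sum_{(x,y)\in Y(\gamma)}c_{x-y}=0$; equivalently, for each residue class $i$ mod $n$, the number of boxes $(x,y)\in Y(\gamma)$ with $x-y\equiv i$ is the same. The conjugate partition is given by $\nu'_m=|\{x:\nu_x\ge m\}|$. *)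

From HB Require Import structures.
From mathcomp Require Import all_boot all_order all_algebra.
Set Implicit Arguments. Unset Strict Implicit. Unset Printing Implicit Defensive.
Import Order.TTheory GRing.Theory Num.Theory.
Local Open Scope ring_scope.

(* A partition: a weakly decreasing finite sequence of positive integers;
   part gamma x = gamma_x (1-indexed), 0 beyond the length. *)
Definition is_partition (g : seq nat) : bool :=
  sorted geq g && all (fun p => 0 < p)%N g.

Definition part (g : seq nat) (x : nat) : nat := nth 0%N g x.-1.

(* The generators c_i of the free Z-module Z^(n-1), indices n-periodic:
   c_i = e_{i mod n} for i mod n in {1..n-1}, c_0 = -(c_1+...+c_{n-1}) = (-1,...,-1). *)
Definition gen (n : nat) (i : int) : 'rV[int]_(n.-1) :=
  let r := `|(i %% n%:Z)%Z|%N in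
  if r == 0%N then \row_(j < n.-1) (-1)
  else \row_(j < n.-1) (if (j : nat) == r.-1 then 1 else 0).

Definition content_sum (n : nat) (g : seq nat) : 'rV[int]_(n.-1) :=
  \sum_(1 <= x < (size g).+1) \sum_(1 <= y < (part g x).+1)
     gen n (x%:Z - y%:Z).

Definition colorless (n : nat) (g : seq nat) : Prop := content_sum n g = 0.

Definition conj_part (g : seq nat) (m : nat) : nat := count (fun p => m <= p)%N g.

(* Let N(r) be the number of boxes (x, y) of nu whose content x - y is congruent
   to r modulo n; nu is n-colorless iff N is constant.  Since nu_1 <= n, nu has
   at most n columns, and column m consists of the boxes (1, m), ..., (nu'_m, m).
   Replacing r by r + 1 shifts the contents counted in column m by one box, so it
   loses the box of content nu'_m - m and gains the (virtual) box (0, m):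
   N(r) + 1 = N(r + 1) + #{m <= n | nu'_m - m = r mod n}, the 1 counting the
   single m <= n with -m = r.  Hence N is constant iff every residue is hit by
   exactly one nu'_m - m, i.e. iff these n residues are all the residues mod n. *)

From mathcomp Require Import all_boot all_order all_algebra zify.
Set Implicit Arguments. Unset Strict Implicit. Unset Printing Implicit Defensive.
Import Order.TTheory GRing.Theory Num.Theory.
Local Open Scope ring_scope.

Lemma count_mem1_iff_eq_mem (T : eqType) (s t : seq T) :
  uniq t -> size s = size t -> {subset s <= t} ->
  {in t, forall x, count_mem x s = 1%N} <-> s =i t.
Proof.
move=> t_uniq size_st sub_st; split=> [count1 x | eq_st x xt].
  apply/idP/idP=> [/sub_st // | xt].
  by rewrite -has_pred1 has_count count1.
have s_uniq : uniq s by rewrite (uniq_size_uniq t_uniq) ?size_st // => y; rewrite eq_st.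
by rewrite count_uniq_mem // eq_st xt.
Qed.

Lemma const_iff_step1 (f g : nat -> nat) (n : nat) :
  (forall k, k < n -> f k + 1 = f k.+1 + g k)%N -> f n = f 0%N ->
  (forall k, k < n -> f k = f 0%N)%N <-> (forall k, k < n -> g k = 1%N)%N.
Proof.
move=> step fn; split=> [fconst k k_lt_n | g1].
  have fSk : f k.+1 = f 0%N.
    by case: (ltnP k.+1 n) => [/fconst // | nk]; rewrite (_ : k.+1 = n) //; lia.
  by have := step k k_lt_n; rewrite fconst // fSk; lia.
elim=> [// | k IH] k_lt_n.
by have := step k (ltnW k_lt_n); rewrite g1 ?IH ?(ltnW k_lt_n); lia.
Qed.

Lemma sorted_geq_leq_nth (s : seq nat) (i y : nat) : sorted geq s -> (0 < y)%N ->
  (y <= nth 0 s i)%N = (i < count (fun p => y <= p) s)%N.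
Proof.
move=> s_sorted y_gt0; elim: s i s_sorted => [|a s IH] i s_sorted /=.
  by rewrite nth_nil; case: y y_gt0.
have s_le_a : all (geq a) s.
  by apply: order_path_min s_sorted => u v w /[swap]; apply: leq_trans.
have count0 : (a < y)%N -> count (fun p => y <= p)%N s = 0%N.
  move=> ay; apply/eqP; rewrite -leqn0 leqNgt -has_count; apply/hasP => -[p ps /= yp].
  by have := allP s_le_a p ps; rewrite /= leqNgt (leq_trans ay yp).
case: i => [|i] /=; last rewrite IH ?(path_sorted s_sorted) //.
all: by case: (leqP y a) => [ya | /count0 ->].
Qed.

Lemma sorted_geq_nth_le_head (s : seq nat) (i : nat) :
  sorted geq s -> (nth 0 s i <= nth 0 s 0)%N.
Proof.
move=> s_sorted; case si: (nth 0 s i) => [// | y].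
have : (y.+1 <= nth 0 s i)%N by rewrite si.
by rewrite !sorted_geq_leq_nth //; apply: leq_ltn_trans.
Qed.

Lemma sum_boxes_by_columns (g : seq nat) (h : nat) (F : nat -> nat -> nat) :
  sorted geq g -> (part g 1 <= h)%N ->
  (\sum_(1 <= x < (size g).+1) \sum_(1 <= y < (part g x).+1) F x y =
   \sum_(1 <= y < h.+1) \sum_(1 <= x < (conj_part g y).+1) F x y)%N.
Proof.
move=> g_sorted g1_le_h.
have in_box x y : (0 < x)%N -> (0 < y)%N ->
    (y < (part g x).+1)%N = (x < (conj_part g y).+1)%N.
  by case: x => // x _ y_gt0; rewrite /part /conj_part !ltnS sorted_geq_leq_nth.
rewrite (eq_big_nat _ _ (F2 := fun x => \sum_(1 <= y < h.+1)
    (if (y < (part g x).+1)%N then F x y else 0%N))); last first.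
  move=> x _; rewrite (big_nat_widen _ _ h.+1) ?big_mkcond // ltnS.
  exact: leq_trans (sorted_geq_nth_le_head _ g_sorted) g1_le_h.
rewrite exchange_big_nat; apply: eq_big_nat => y /andP[y_gt0 _].
rewrite [RHS](big_nat_widen _ _ (size g).+1) ?ltnS ?count_size // [RHS]big_mkcond.
by apply: eq_big_nat => x /andP[x_gt0 _]; rewrite in_box.
Qed.

Definition eqmod_ind (n : nat) (t r : int) : nat := (n%:Z %| t - r)%Z.

Lemma eqmod_ind_add1 (n : nat) (t r : int) : eqmod_ind n (t + 1) (r + 1) = eqmod_ind n t r.
Proof. by rewrite /eqmod_ind opprD addrACA subrr addr0. Qed.

Lemma eqmod_ind_addn (n : nat) (t r : int) : eqmod_ind n t (r + n%:Z) = eqmod_ind n t r.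
Proof. by rewrite /eqmod_ind -!eqz_mod_dvd modzDr. Qed.

Lemma eqmod_ind_oppC (n : nat) (t r : int) : eqmod_ind n (- t) r = eqmod_ind n (- r) t.
Proof. by rewrite /eqmod_ind addrC. Qed.

Section Residues.

Variable n : nat.
Hypothesis n_gt0 : (0 < n)%N.

Let nZ_neq0 : n%:Z != 0. Proof. by rewrite eqz_nat -lt0n. Qed.

Lemma modz_in_iota (t : int) : (t %% n%:Z)%Z \in [seq k%:Z | k <- iota 0 n].
Proof.
have t_ge0 := modz_ge0 t nZ_neq0.
apply/mapP; exists `|(t %% n%:Z)%Z|%N; last by rewrite gez0_abs.
by rewrite mem_iota add0n -ltz_nat gez0_abs //; have := ltz_mod t nZ_neq0.
Qed.

Lemma dvdz_sub_small (t : int) (r : nat) :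
  (r < n)%N -> (n%:Z %| t - r%:Z)%Z = ((t %% n%:Z)%Z == r%:Z).
Proof. by move=> r_lt_n; rewrite -eqz_mod_dvd [X in _ == X]modz_small. Qed.

Lemma sum_eqmod_ind (t : int) : (\sum_(0 <= r < n) eqmod_ind n t r%:Z = 1)%N.
Proof.
have /mapP[q] := modz_in_iota t; rewrite mem_iota add0n => /andP[_ q_lt_n] tq.
rewrite (eq_big_nat _ _ (F2 := fun r => (r == q : nat))) => [|r /andP[_ r_lt_n]].
  by rewrite -big_mkcond /= big_nat1_eq q_lt_n.
by rewrite /eqmod_ind dvdz_sub_small // tq eqz_nat eq_sym.
Qed.

Lemma sum_eqmod_ind_from1 (t : int) : (\sum_(1 <= r < n.+1) eqmod_ind n t r%:Z = 1)%N.
Proof.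
rewrite big_nat_recr //= -[n%:Z]add0r eqmod_ind_addn addnC -big_ltn //.
exact: sum_eqmod_ind.
Qed.

Lemma mem_iota_modz :
  [seq (k%:Z %% n%:Z)%Z | k <- iota 1 n] =i [seq k%:Z | k <- iota 0 n].
Proof.
move=> x; apply/mapP/idP => [[k _ ->] | /mapP[k]]; first exact: modz_in_iota.
rewrite mem_iota add0n => /andP[_ k_lt_n] ->.
case: k k_lt_n => [| k] k_lt_n.
  by exists n; [rewrite mem_iota n_gt0 add1n ltnSn | rewrite modzz].
exists (k.+1); first by rewrite mem_iota add1n ltnS /= ltnW.
by rewrite modz_small // ltz_nat k_lt_n.
Qed.

Lemma count_mem1_iff_eq_residues (s : seq int) :
  size s = n -> {subset s <= [seq k%:Z | k <- iota 0 n]} ->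
  (forall k, k < n -> count_mem k%:Z s = 1)%N <->
  s =i [seq (k%:Z %% n%:Z)%Z | k <- iota 1 n].
Proof.
move=> size_s sub_s.
have t_uniq : uniq [seq k%:Z | k <- iota 0 n].
  by rewrite map_inj_uniq ?iota_uniq // => i j [].
have /count_mem1_iff_eq_mem := t_uniq; rewrite size_map size_iota => /(_ s size_s sub_s).
move=> [count1_eq eq_count1]; split=> [count1 x | eq_s].
  rewrite mem_iota_modz; apply: count1_eq => _ /mapP[k + ->].
  by rewrite mem_iota => /andP[_ /count1].
move=> k k_lt_n; apply: eq_count1; last by apply/map_f; rewrite mem_iota.
by move=> x; rewrite eq_s mem_iota_modz.
Qed.

End Residues.

Lemma gen_entry (n : nat) (c : int) (j : 'I_n.-1) : (1 < n)%N ->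
  gen n c 0 j = (eqmod_ind n c j.+1%:Z)%:Z - (eqmod_ind n c 0)%:Z.
Proof.
move=> n_gt1; have n_gt0 : (0 < n)%N by apply: ltnW.
have j_lt_n : (j.+1 < n)%N by rewrite -ltn_predRL.
have /mapP[q _ cq] := modz_in_iota n_gt0 c.
rewrite /gen /eqmod_ind !dvdz_sub_small // cq !eqz_nat absz_nat.
case: eqP => [-> | /eqP q_neq0]; rewrite mxE //= subr0 -(inj_eq succn_inj) prednK ?lt0n //.
by rewrite eq_sym; case: (_ == _).
Qed.

Lemma sum_column_eqmod_ind_step (n : nat) (r : int) (y h : nat) :
  (\sum_(1 <= x < h.+1) eqmod_ind n (x%:Z - y%:Z) r + eqmod_ind n (- y%:Z) r =
   \sum_(1 <= x < h.+1) eqmod_ind n (x%:Z - y%:Z) (r + 1)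
     + eqmod_ind n (h%:Z - y%:Z) r)%N.
Proof.
elim: h => [| h IH]; first by rewrite !big_geq // sub0r.
have shift : eqmod_ind n (h.+1%:Z - y%:Z) (r + 1) = eqmod_ind n (h%:Z - y%:Z) r.
  by rewrite -[RHS]eqmod_ind_add1; congr eqmod_ind; lia.
by rewrite !(big_nat_recr h.+1) //= shift addnAC IH addnAC.
Qed.

Definition content_count (n : nat) (g : seq nat) (r : int) : nat :=
  \sum_(1 <= x < (size g).+1) \sum_(1 <= y < (part g x).+1) eqmod_ind n (x%:Z - y%:Z) r.

Definition conj_residues (n : nat) (g : seq nat) : seq int :=
  [seq ((conj_part g m)%:Z - m%:Z) %% n%:Z | m <- iota 1 n]%Z.

Lemma content_count_step (n : nat) (g : seq nat) (k : nat) :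
  (0 < n)%N -> sorted geq g -> (part g 1 <= n)%N -> (k < n)%N ->
  (content_count n g k%:Z + 1 =
   content_count n g k.+1%:Z + count_mem k%:Z (conj_residues n g))%N.
Proof.
move=> n_gt0 g_sorted g1_le_n k_lt_n.
have sum_first_box : (\sum_(1 <= y < n.+1) eqmod_ind n (- y%:Z) k%:Z = 1)%N.
  by rewrite (eq_bigr _ (fun y _ => eqmod_ind_oppC _ _ _)) sum_eqmod_ind_from1.
have count_last_box : count_mem k%:Z (conj_residues n g) =
    (\sum_(1 <= y < n.+1) eqmod_ind n ((conj_part g y)%:Z - y%:Z) k%:Z)%N.
  rewrite count_map -sum1_count big_mkcond /index_iota subSS subn0.
  by apply: eq_big => // y _; rewrite /eqmod_ind dvdz_sub_small.
have -> : k.+1%:Z = k%:Z + 1 by lia.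
rewrite /content_count !(sum_boxes_by_columns _ g_sorted g1_le_n).
rewrite count_last_box -big_split /=.
rewrite -(eq_bigr _ (fun y _ => sum_column_eqmod_ind_step n k%:Z y (conj_part g y))).
by rewrite big_split sum_first_box.
Qed.

Lemma content_sum_entry (n : nat) (g : seq nat) (j : 'I_n.-1) : (1 < n)%N ->
  content_sum n g 0 j = (content_count n g j.+1%:Z)%:Z - (content_count n g 0)%:Z.
Proof.
move=> n_gt1; rewrite /content_sum /content_count -!natz !natr_sum summxE -sumrB.
apply: eq_bigr => x _; rewrite !natr_sum summxE -sumrB.
by apply: eq_bigr => y _; rewrite gen_entry // !natz.
Qed.

Lemma content_count_addn (n : nat) (g : seq nat) (r : int) :
  content_count n g (r + n%:Z) = content_count n g r.
Proof. by apply: eq_bigr => x _; apply: eq_bigr => y _; rewrite eqmod_ind_addn. Qed.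

Lemma colorlessE (n : nat) (g : seq nat) : (1 < n)%N ->
  colorless n g <-> (forall k, k < n -> content_count n g k%:Z = content_count n g 0)%N.
Proof.
move=> n_gt1; rewrite /colorless -(rowP _ 0); split=> [entry0 [// | j] j_lt_n | count_const j].
  have j_lt : (j < n.-1)%N by rewrite ltn_predRL.
  have /eqP := entry0 (Ordinal j_lt).
  by rewrite content_sum_entry // mxE subr_eq0 eqz_nat => /eqP.
by rewrite content_sum_entry // mxE count_const ?subrr // -ltn_predRL.
Qed.

Lemma colorless_iff_count_mem1 (n : nat) (g : seq nat) :
  (1 < n)%N -> sorted geq g -> (part g 1 <= n)%N ->
  colorless n g <-> (forall k, k < n -> count_mem k%:Z (conj_residues n g) = 1)%N.
Proof.
move=> n_gt1 g_sorted g1_le_n; rewrite colorlessE //.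
apply: const_iff_step1 => [k k_lt_n | ]; first exact: content_count_step (ltnW n_gt1) _ _ _.
by rewrite -[n%:Z]add0r content_count_addn.
Qed.

Theorem mainTheorem9 (n : nat) (nu : seq nat) :
  (3 <= n)%N -> is_partition nu -> (part nu 1 <= n)%N ->
  (colorless n nu <->
   [seq (((conj_part nu m)%:Z - m%:Z) %% n%:Z)%Z | m <- iota 1 n]
     =i [seq ((k%:Z) %% n%:Z)%Z | k <- iota 1 n]).
Proof.
move=> n_ge3 /andP[nu_sorted _] nu1_le_n.
have n_gt1 : (1 < n)%N by apply: leq_trans n_ge3.
rewrite colorless_iff_count_mem1 //.
apply: count_mem1_iff_eq_residues => [|| _ /mapP[m _ ->]].
- exact: ltnW.
- by rewrite size_map size_iota.
- exact: modz_in_iota (ltnW n_gt1) _.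
Qed.
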